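(* Let $Q=(M,\Omega)$ be a $2$-sheltering matroid on ground set $U$ such that the multimatroid $\mathcal Z(Q)$ is tight, and suppose $M$ is representable over a field $\mathbb F$. Then $r(M)=|\Omega|$ (so $Q$ is strict). Moreover, if $B$ is a basis of $M$ that is a transversal of $\Omega$ and $T=U\setminus B$ (a transversal), then for every standard $\mathbb F$-representation $(I\mid A)$ of $M$ with respect to $B$ (identity columns indexed by $B$, columns of $A$ indexed by $T$), the matrix $A$ is zero-diagonal, i.e. $A_{b,t}=0$ whenever $\{b,t\}\in\Omega$. If $\mathbb F=GF(2)$, then $A$ is in addition symmetric, i.e. $A_{b,t}=A_{b',t'}$ whenever $\{b,t'\},\{b',t\}\in\Omega$.
   Context: Let $\Omega$ be a partition of a finite set $U$; a subtransversal (transversal) meets every class in at most (exactly) one element. A sheltering matroid is a pair $Q=(M,\Omega)$ with $M$ a matroid on $U$ such that for every independent subtransversal $I$ of $M$ and every $2$-element subset $\{x,y\}$ of a class $\omega$ with $\omega\cap I=\emptyset$, $I\cup\{x\}$ or $I\cup\{y\}$ is independent in $M$; it is a $2$-sheltering matroid if all classes have size $2$, and strict if $r(M)\le|\Omega|$. $\mathcal Z(Q)$ is the multimatroid on $(U,\Omega)$ whose independent sets are the independent subtransversals of $M$. $\mathcal Z(Q)$ is tight if every class has size $>1$ and for every subtransversal $S$ with $|S|=|\Omega|-1$, letting $\omega$ be the class disjoint from $S$, there is $x\in\omega$ with $r_M(S\cup\{x\})=r_M(S)$. *)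

From HB Require Import structures.
From mathcomp Require Import all_boot all_algebra.
Set Implicit Arguments. Unset Strict Implicit. Unset Printing Implicit Defensive.
Import GRing.Theory.
Local Open Scope ring_scope.

Record matroid (U : finType) := Matroid {
  indep : {set U} -> bool;
  indep0 : indep set0;
  indep_sub : forall X Y : {set U}, Y \subset X -> indep X -> indep Y;
  indep_aug : forall X Y : {set U}, indep X -> indep Y -> (#|X| < #|Y|)%N ->
      exists2 x, x \in Y :\: X & indep (x |: X)
}.

Definition mrank (U : finType) (M : matroid U) (S : {set U}) : nat :=
  \max_(I : {set U} | (I \subset S) && indep M I) #|I|.

Definition mrankM (U : finType) (M : matroid U) : nat := mrank M setT.

Definition is_basis (U : finType) (M : matroid U) (B : {set U}) : Prop :=
  indep M B /\ forall x, x \notin B -> ~~ indep M (x |: B).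

Definition subtransversal (U : finType) (Omega : {set {set U}}) (S : {set U}) :=
  forall w, w \in Omega -> (#|S :&: w| <= 1)%N.
Definition om_transversal (U : finType) (Omega : {set {set U}}) (S : {set U}) :=
  forall w, w \in Omega -> #|S :&: w| = 1%N.

Definition sheltering (U : finType) (M : matroid U) (Omega : {set {set U}}) :=
  partition Omega [set: U] /\
  forall (I : {set U}) (w : {set U}) (x y : U),
    indep M I -> subtransversal Omega I -> w \in Omega -> [disjoint w & I] ->
    x \in w -> y \in w -> x != y ->
    indep M (x |: I) || indep M (y |: I).

Definition two_sheltering (U : finType) (M : matroid U) (Omega : {set {set U}}) :=
  sheltering M Omega /\ forall w, w \in Omega -> #|w| = 2%N.

Definition Z_tight (U : finType) (M : matroid U) (Omega : {set {set U}}) :=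
  (forall w, w \in Omega -> (1 < #|w|)%N) /\
  forall (S w : {set U}), subtransversal Omega S -> #|S| = (#|Omega| - 1)%N ->
    w \in Omega -> [disjoint w & S] ->
    exists2 x, x \in w & mrank M (x |: S) = mrank M S.

Definition represents (F : fieldType) (U : finType) (n : nat)
    (M : matroid U) (v : U -> 'rV[F]_n) : Prop :=
  forall S : {set U},
    indep M S = row_free (\matrix_(i < #|S|) v (enum_val i)).

Definition representable (F : fieldType) (U : finType) (M : matroid U) : Prop :=
  exists n (v : U -> 'rV[F]_n), represents M v.

(* The columns of the standard matrix (I | A) w.r.t. B: coordinates are
   indexed by B (embedded in the coordinates indexed by U, the coordinates
   outside B being identically 0).  Column u in B is the unit vector e_u,
   column t not in B is (A b t)_{b in B}. *)
Definition std_vec (F : fieldType) (U : finType) (B : {set U}) (A : U -> U -> F)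
    (u : U) : 'rV[F]_#|U| :=
  \row_(j < #|U|) (let b := enum_val j in
     if b \in B then (if u \in B then (u == b)%:R else A b u) else 0).

Definition std_rep (F : fieldType) (U : finType) (M : matroid U)
    (B : {set U}) (A : U -> U -> F) : Prop :=
  represents M (std_vec B A).

(* An independent transversal exists, since the sheltering property lets any
   independent subtransversal grow into a class it misses.  Tightness forbids
   a subtransversal S of size |Omega| - 1 and a class {x, y} avoiding it such
   that both S + x and S + y raise the rank; each claim is proved by building
   such a configuration.  If r(M) > |Omega|, augment an independent transversal
   B by some x and take S = B - b, where b shares the class of x.  If A b t <> 0
   for a class {b, t}, then B - b + t is independent and S = B - b again.  If
   A b' t' = 0 for classes {b, t'} and {b', t} while A b t <> 0, put
   R = B - b - b': the column of t' lies in the span of R (as A b t' = 0 too),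
   so S = R + t' has rank |R| while R + b' and R + t are independent.  Over
   GF(2) the two implications A b' t' = 0 -> A b t = 0 and back give symmetry. *)

From HB Require Import structures.
From mathcomp Require Import all_boot all_algebra.
Set Implicit Arguments. Unset Strict Implicit. Unset Printing Implicit Defensive.
Import GRing.Theory.
Local Open Scope ring_scope.

Lemma disjoint_set2 (T : finType) (x y : T) (S : {set T}) :
  [disjoint [set x; y] & S] = (x \notin S) && (y \notin S).
Proof. by rewrite disjoints_subset subUset !sub1set !inE. Qed.

Lemma set2_card2 (T : finType) (w : {set T}) x y :
  #|w| = 2%N -> x \in w -> y \in w -> x != y -> w = [set x; y].
Proof.
move=> cw xw yw xy; apply/esym/eqP; rewrite eqEcard cw cards2 xy leqnn andbT.
by apply/subsetP => z /set2P [] ->.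
Qed.

Lemma sumr_mul_delta (F : fieldType) (U : finType) (R : {set U}) (c : U -> F) d :
  \sum_(u in R) c u * (u == d)%:R = if d \in R then c d else 0.
Proof.
case: ifP => dR.
  rewrite (bigD1 d) //= eqxx mulr1 big1 ?addr0 // => u /andP [_ /negbTE ->].
  by rewrite mulr0.
by rewrite big1 // => u uR; rewrite (_ : u == d = false) ?mulr0 //; apply: contraFF dR => /eqP <-.
Qed.

Section Rank.
Variables (U : finType) (M : matroid U).

Lemma mrank_ge_indep (J X : {set U}) :
  J \subset X -> indep M J -> (#|J| <= mrank M X)%N.
Proof.
move=> JX iJ.
by apply: (leq_bigmax_cond (P := fun I : {set U} => (I \subset X) && indep M I)); rewrite JX.
Qed.

Lemma mrank_le_card (X : {set U}) : (mrank M X <= #|X|)%N.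
Proof. by apply/bigmax_leqP => I /andP [IX _]; apply: subset_leq_card. Qed.

Lemma mrank_lt_card_dep (X : {set U}) : ~~ indep M X -> (mrank M X < #|X|)%N.
Proof.
move=> depX; have cX : (0 < #|X|)%N.
  by rewrite card_gt0; apply: contraNneq depX => ->; apply: indep0.
rewrite -(prednK cX) ltnS; apply/bigmax_leqP => I /andP [IX iI].
rewrite -ltnS prednK //; apply: proper_card; rewrite properEneq IX andbT.
by apply: contraNneq depX => <-.
Qed.

Lemma mrank_setU1_gt (R S : {set U}) x :
  R \subset S -> x \notin R -> indep M (x |: R) -> (mrank M S <= #|R|)%N ->
  (mrank M S < mrank M (x |: S))%N.
Proof.
move=> RS xR ixR leSR; have := mrank_ge_indep (setUS [set x] RS) ixR.
by apply: leq_trans; rewrite cardsU1 xR.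
Qed.

End Rank.

Section Representation.
Variables (F : fieldType) (U : finType) (n : nat) (M : matroid U) (v : U -> 'rV[F]_n).
Hypothesis repMv : represents M v.

Lemma mulmx_vectors (S : {set U}) (x : 'rV[F]_#|S|) :
  x *m (\matrix_(i < #|S|) v (enum_val i)) = \sum_(i < #|S|) x 0 i *: v (enum_val i).
Proof.
rewrite mulmx_sum_row; apply: eq_bigr => i _; congr (_ *: _).
by apply/rowP => j; rewrite !mxE.
Qed.

Lemma represents_indep (S : {set U}) :
  (forall c : U -> F, \sum_(u in S) c u *: v u = 0 -> {in S, forall u, c u = 0}) ->
  indep M S.
Proof.
move=> freeS; rewrite repMv -kermx_eq0; apply/eqP/row_matrixP => i.
set X := \matrix_(i < #|S|) v (enum_val i); set x := row i (kermx X).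
have xX : x *m X = 0 by rewrite /x -row_mul mulmx_ker row0.
rewrite row0; apply/rowP => j; rewrite mxE.
have jS : enum_val j \in S by apply: enum_valP.
pose c u := x 0 (enum_rank_in jS u).
have sum_c : \sum_(u in S) c u *: v u = 0.
  rewrite big_enum_val -[RHS]xX mulmx_vectors.
  by apply: eq_bigr => k _; rewrite /c enum_valK_in.
by have := freeS c sum_c _ jS; rewrite /c enum_valK_in /x mxE => ->; rewrite mxE.
Qed.

Lemma represents_dep (S : {set U}) (c : U -> F) (u0 : U) :
  \sum_(u in S) c u *: v u = 0 -> u0 \in S -> c u0 != 0 -> ~~ indep M S.
Proof.
move=> sum_c u0S cu0; rewrite repMv; apply/negP => freeS.
set X := \matrix_(i < #|S|) v (enum_val i).
pose x : 'rV[F]_#|S| := \row_i c (enum_val i).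
have xX : x *m X = 0 *m X.
  rewrite mul0mx mulmx_vectors -[RHS]sum_c [RHS]big_enum_val.
  by apply: eq_bigr => i _; rewrite mxE.
move/rowP/(_ (enum_rank_in u0S u0)): (row_free_inj freeS xX).
by rewrite !mxE enum_rankK_in // => /eqP; rewrite (negbTE cu0).
Qed.

End Representation.

Section StandardRepresentation.
Variables (F : fieldType) (U : finType) (M : matroid U) (B : {set U}) (A : U -> U -> F).
Hypothesis repBA : std_rep M B A.

Lemma std_vec_sum_coord (S : {set U}) (c : U -> F) d :
  (\sum_(u in S) c u *: std_vec B A u) 0 (enum_rank d) =
  if d \in B then \sum_(u in S) c u * (if u \in B then (u == d)%:R else A d u) else 0.
Proof.
rewrite summxE; case: ifP => dB.
  by apply: eq_bigr => u _; rewrite !mxE enum_rankK /= dB.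
by rewrite big1 // => u _; rewrite !mxE enum_rankK /= dB mulr0.
Qed.

Lemma std_vec_sum_setU1_coord (R : {set U}) (c : U -> F) t d :
  R \subset B -> t \notin B -> d \in B ->
  (\sum_(u in t |: R) c u *: std_vec B A u) 0 (enum_rank d) =
  c t * A d t + (if d \in R then c d else 0).
Proof.
move=> RB tB dB; have tR : t \notin R by apply: contra tB; apply: (subsetP RB).
rewrite std_vec_sum_coord dB (big_setU1 _ tR) /= (negbTE tB) -sumr_mul_delta.
by congr (_ + _); apply: eq_bigr => u uR; rewrite (subsetP RB _ uR).
Qed.

Lemma std_rep_indep_setU1 (R : {set U}) b t :
  R \subset B -> b \in B -> b \notin R -> t \notin B -> A b t != 0 ->
  indep M (t |: R).
Proof.
move=> RB bB bR tB Abt; apply: (represents_indep repBA) => c sum_c.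
have coord0 d : d \in B -> c t * A d t + (if d \in R then c d else 0) = 0.
  by move=> dB; rewrite -std_vec_sum_setU1_coord // sum_c mxE.
have ct : c t = 0.
  by move/eqP: (coord0 b bB); rewrite (negbTE bR) addr0 mulf_eq0 (negbTE Abt) orbF => /eqP.
move=> u /setU1P [-> // | uR].
by have := coord0 u (subsetP RB _ uR); rewrite uR ct mul0r add0r.
Qed.

Lemma std_rep_dep_setU1 (R : {set U}) t :
  R \subset B -> t \notin B -> (forall d, d \in B -> d \notin R -> A d t = 0) ->
  ~~ indep M (t |: R).
Proof.
move=> RB tB Aout; pose c u := if u == t then 1 else - A u t.
apply: (represents_dep (c := c) (u0 := t) repBA); rewrite ?setU11 ?/c ?eqxx ?oner_neq0 //.
apply/rowP => j; rewrite -(enum_valK j) mxE; set d := enum_val j.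
case: (boolP (d \in B)) => dB; last by rewrite std_vec_sum_coord (negbTE dB).
rewrite std_vec_sum_setU1_coord // eqxx mul1r; case: ifP => dR; last by rewrite Aout ?dR ?addr0.
by rewrite ifN ?addrN //; apply: contraTneq dR => ->; apply: contra tB; apply: (subsetP RB).
Qed.

End StandardRepresentation.

Section Transversals.
Variables (U : finType) (Omega : {set {set U}}).
Hypothesis partOmega : partition Omega [set: U].

Lemma partition_class_eq (w1 w2 : {set U}) x :
  w1 \in Omega -> w2 \in Omega -> x \in w1 -> x \in w2 -> w1 = w2.
Proof.
case/and3P: partOmega => _ tI _ w1O w2O xw1 xw2.
by rewrite -(def_pblock tI w1O xw1) (def_pblock tI w2O xw2).
Qed.

Lemma pblock_class x : pblock Omega x \in Omega.
Proof. by apply: pblock_mem; rewrite (cover_partition partOmega). Qed.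

Lemma mem_pblock_class x : x \in pblock Omega x.
Proof. by rewrite mem_pblock (cover_partition partOmega). Qed.

Lemma transversal_subtransversal (S : {set U}) :
  om_transversal Omega S -> subtransversal Omega S.
Proof. by move=> TS w wO; rewrite TS. Qed.

Lemma subtransversalS (S S' : {set U}) :
  S' \subset S -> subtransversal Omega S -> subtransversal Omega S'.
Proof. by move=> S'S sS w wO; apply: leq_trans (sS w wO); apply/subset_leq_card/setSI. Qed.

Lemma subtransversal_setU1 (S w : {set U}) x :
  subtransversal Omega S -> w \in Omega -> [disjoint w & S] -> x \in w ->
  subtransversal Omega (x |: S).
Proof.
move=> sS wO dwS xw w' w'O; case: (boolP (x \in w')) => xw'.
  rewrite -(partition_class_eq wO w'O xw xw') -(cards1 x); apply: subset_leq_card.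
  apply/subsetP => u /setIP [/setU1P [-> | uS] uw]; first exact: set11.
  by rewrite (disjointFr dwS uw) in uS.
apply: leq_trans (sS w' w'O); apply/subset_leq_card/subsetP => u /setIP [/setU1P [eu | uS] uw'].
  by rewrite -eu uw' in xw'.
by rewrite inE uS.
Qed.

Lemma transversal_meet (S w : {set U}) :
  om_transversal Omega S -> w \in Omega ->
  exists b, [/\ b \in S, b \in w & S :&: w = [set b]].
Proof.
move=> TS wO; have /cards1P [b Sw] := introT eqP (TS w wO).
by exists b; have /setIP [] : b \in S :&: w by rewrite Sw set11.
Qed.

Lemma card_transversal (S : {set U}) : om_transversal Omega S -> #|S| = #|Omega|.
Proof.
move=> TS; have pS_inj : {in S &, injective (pblock Omega)}.
  move=> u1 u2 u1S u2S e; have [b [_ _ Sw]] := transversal_meet TS (pblock_class u1).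
  have /set1P -> : u1 \in [set b] by rewrite -Sw inE u1S mem_pblock_class.
  by have /set1P -> : u2 \in [set b] by rewrite -Sw inE u2S e mem_pblock_class.
rewrite -(card_in_imset pS_inj); apply: eq_card => w; apply/imsetP/idP => [[u _ ->] | wO].
  exact: pblock_class.
have [b [bS bw _]] := transversal_meet TS wO; exists b => //.
exact: partition_class_eq wO (pblock_class b) bw (mem_pblock_class b).
Qed.

Lemma transversal_setD1 (S : {set U}) b :
  om_transversal Omega S -> b \in S ->
  subtransversal Omega (S :\ b) /\ #|S :\ b| = (#|Omega| - 1)%N.
Proof.
move=> TS bS; split; first exact: subtransversalS (subsetDl _ _) (transversal_subtransversal TS).
by rewrite -(card_transversal TS) (cardsD1 b S) bS add1n subn1.
Qed.

Lemma set2_class_eq (a a' x : U) :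
  [set a; x] \in Omega -> [set a'; x] \in Omega -> a != x -> a = a'.
Proof.
move=> wO w'O ax; have := partition_class_eq wO w'O (set22 _ _) (set22 _ _).
by move/setP/(_ a); rewrite !inE eqxx /= (negbTE ax) orbF => /esym /eqP.
Qed.

End Transversals.

Lemma exists_indep_transversal (U : finType) (M : matroid U) (Omega : {set {set U}}) :
  sheltering M Omega -> (forall w, w \in Omega -> (1 < #|w|)%N) ->
  exists2 B, indep M B & om_transversal Omega B.
Proof.
move=> [partOmega shelt] Omega_gt1.
pose P I := indep M I && [forall w in Omega, #|I :&: w| <= 1]%N.
have P0 : P set0 by rewrite /P indep0; apply/forall_inP => w _; rewrite set0I cards0.
case: (arg_maxnP (fun I : {set U} => #|I|) P0) => B /andP [iB /forall_inP sB] maxB.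
exists B => // w wO; apply/eqP; rewrite eqn_leq sB //= card_gt0 setIC setI_eq0.
apply/negP => dwB; have sB' : subtransversal Omega B by move=> w' /sB.
have no_ext z : z \in w -> ~~ indep M (z |: B).
  move=> zw; apply/negP => izB.
  suff : (#|z |: B| <= #|B|)%N by rewrite cardsU1 (disjointFr dwB zw) ltnn.
  apply: maxB; rewrite /P izB; apply/forall_inP => w1 w1O.
  exact: (subtransversal_setU1 partOmega sB' wO dwB zw w1O).
have /card_gt1P [x [y [xw yw xy]]] := Omega_gt1 w wO.
by case/orP: (shelt B w x y iB sB' wO dwB xw yw xy); apply/negP; apply: no_ext.
Qed.

Lemma Z_tight_not_both_indep (U : finType) (M : matroid U) (Omega : {set {set U}})
    (S R : {set U}) x y :
  Z_tight M Omega -> subtransversal Omega S -> #|S| = (#|Omega| - 1)%N ->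
  [set x; y] \in Omega -> [disjoint [set x; y] & S] ->
  R \subset S -> (mrank M S <= #|R|)%N -> indep M (x |: R) -> ~~ indep M (y |: R).
Proof.
case=> _ tight sS cS wO dwS RS leSR ixR; apply/negP => iyR.
have /andP [xS yS] : (x \notin S) && (y \notin S) by rewrite -disjoint_set2.
have notR z : z \notin S -> z \notin R by apply: contra; apply: (subsetP RS).
have [z /set2P [] -> stable] := tight S _ sS cS wO dwS.
- by have := mrank_setU1_gt RS (notR x xS) ixR leSR; rewrite stable ltnn.
- by have := mrank_setU1_gt RS (notR y yS) iyR leSR; rewrite stable ltnn.
Qed.

Lemma mrankM_tight_two_sheltering (U : finType) (M : matroid U) (Omega : {set {set U}}) :
  two_sheltering M Omega -> Z_tight M Omega -> mrankM M = #|Omega|.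
Proof.
move=> [[partOmega shelt] card2] tight.
have [B iB TB] := exists_indep_transversal (conj partOmega shelt) tight.1.
have cB := card_transversal partOmega TB.
apply/eqP; rewrite eqn_leq -{2}cB mrank_ge_indep ?subsetT // andbT.
apply/bigmax_leqP => I /andP [_ iI]; rewrite leqNgt -cB; apply/negP => ltBI.
have [x /setDP [xI xB] ixB] := indep_aug iB iI ltBI.
have [b [bB bw _]] := transversal_meet TB (pblock_class partOmega x).
have bx : b != x by apply: contraNneq xB => <-.
have wE := set2_card2 (card2 _ (pblock_class partOmega x)) bw (mem_pblock_class partOmega x) bx.
have [sBb cBb] := transversal_setD1 partOmega TB bB.
have := Z_tight_not_both_indep (x := b) (y := x) tight sBb cBb _ _ (subxx _) (mrank_le_card _ _).
rewrite disjoint_set2 setD11 !inE (negbTE xB) andbF setD1K // -wE (pblock_class partOmega).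
move/(_ isT isT iB)/negP; apply; apply: indep_sub ixB.
by rewrite setUS // subsetDl.
Qed.

Section TightStandardRepresentation.
Variables (F : fieldType) (U : finType) (M : matroid U) (Omega : {set {set U}}).
Variables (B : {set U}) (A : U -> U -> F).
Hypotheses (partOmega : partition Omega [set: U]) (tight : Z_tight M Omega).
Hypotheses (iB : indep M B) (TB : om_transversal Omega B) (repBA : std_rep M B A).

Lemma std_rep_zero_diag b t :
  b \in B -> t \notin B -> [set b; t] \in Omega -> A b t = 0.
Proof.
move=> bB tB wO; apply/eqP/negPn/negP => Abt.
have [sBb cBb] := transversal_setD1 partOmega TB bB.
have := Z_tight_not_both_indep tight sBb cBb wO _ (subxx _) (mrank_le_card _ _).
rewrite disjoint_set2 setD11 !inE (negbTE tB) andbF setD1K // => /(_ isT iB) /negP; apply.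
by apply: (std_rep_indep_setU1 repBA (subsetDl _ _) bB _ tB Abt); rewrite setD11.
Qed.

Lemma std_rep_cross_zero b b' t t' :
  b \in B -> b' \in B -> b != b' -> t \notin B -> t' \notin B ->
  [set b; t'] \in Omega -> [set b'; t] \in Omega -> A b' t' = 0 -> A b t = 0.
Proof.
move=> bB b'B bb' tB t'B w1O w2O Ab't'; apply/eqP/negPn/negP => Abt.
set R := B :\ b :\ b'.
have RB : R \subset B by rewrite /R; apply: subset_trans (subsetDl _ _) (subsetDl _ _).
have notR z : z \notin B -> z \notin R by apply: contra; apply: (subsetP RB).
have bR : b \notin R by rewrite !inE eqxx andbF.
have b'R : b' \notin R by rewrite !inE eqxx.
have cR : #|R|.+2 = #|Omega|.
  by rewrite -(card_transversal partOmega TB) (cardsD1 b B) (cardsD1 b' (B :\ b)) !inE eq_sym bb' bB b'B.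
have depS : ~~ indep M (t' |: R).
  apply: (std_rep_dep_setU1 repBA RB t'B) => d dB.
  rewrite !inE dB andbT negb_and !negbK => /orP [] /eqP -> //.
  exact: std_rep_zero_diag bB t'B w1O.
have sS : subtransversal Omega (t' |: R).
  have sR := subtransversalS RB (transversal_subtransversal TB).
  by apply: (subtransversal_setU1 partOmega sR w1O _ (set22 b t')); rewrite disjoint_set2 bR notR.
have tt' : t != t'.
  have bt : b != t by apply: contraNneq tB => <-; rewrite bB.
  by apply: contraNneq bb' => et; apply/eqP/(set2_class_eq partOmega _ w2O bt); rewrite et.
have b't' : b' != t' by apply: contraNneq t'B => <-; rewrite b'B.
have cS : #|t' |: R| = (#|Omega| - 1)%N by rewrite cardsU1 notR // -cR.
have dS : [disjoint [set b'; t] & t' |: R].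
  by rewrite disjoint_set2 !in_setU1 !negb_or b't' tt' b'R notR.
have rkS : (mrank M (t' |: R) <= #|R|)%N.
  by have := mrank_lt_card_dep depS; rewrite cardsU1 notR.
have ib'R : indep M (b' |: R) by apply: indep_sub iB; rewrite subUset sub1set b'B.
have := Z_tight_not_both_indep tight sS cS w2O dS (subsetUr _ _) rkS ib'R.
by rewrite (std_rep_indep_setU1 repBA RB bB bR tB Abt).
Qed.

End TightStandardRepresentation.

Theorem proposition2p7 (F : fieldType) (U : finType) (M : matroid U)
    (Omega : {set {set U}}) :
  two_sheltering M Omega -> Z_tight M Omega -> representable F M ->
  mrankM M = #|Omega| /\
  (forall (B : {set U}) (A : U -> U -> F),
     is_basis M B -> om_transversal Omega B -> std_rep M B A ->
     (forall b t, b \in B -> t \notin B -> [set b; t] \in Omega -> A b t = 0) /\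
     ((forall x : F, x = 0 \/ x = 1) ->
        forall b b' t t', b \in B -> b' \in B -> t \notin B -> t' \notin B ->
          [set b; t'] \in Omega -> [set b'; t] \in Omega -> A b t = A b' t')).
Proof.
move=> shelt tight _; have [[partOmega _] _] := shelt.
split; first exact: mrankM_tight_two_sheltering.
move=> B A [iB _] TB repBA; split; first exact: (std_rep_zero_diag partOmega tight iB TB repBA).
move=> binary b b' t t' bB b'B tB t'B w1O w2O.
case: (eqVneq b b') w2O => [<- | bb'] w2O.
  have t'b : t' != b by apply: contraNneq t'B => ->.
  rewrite setUC in w1O; rewrite setUC in w2O.
  by rewrite (set2_class_eq partOmega w1O w2O t'b).
have cross := std_rep_cross_zero partOmega tight iB TB repBA.
have zero1 := cross _ _ _ _ bB b'B bb' tB t'B w1O w2O.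
have b'b : b' != b by rewrite eq_sym.
have zero2 := cross _ _ _ _ b'B bB b'b t'B tB w2O w1O.
have [e1 | e1] := binary (A b t); have [e2 | e2] := binary (A b' t'); rewrite e1 e2 //.
- by move: (zero2 e1); rewrite e2 => /eqP; rewrite oner_eq0.
- by move: (zero1 e2); rewrite e1 => /eqP; rewrite oner_eq0.
Qed.
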